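(* Let $A,E\in M_n(\mathbb{FT})$ with $E$ idempotent, and let $\{c_1,\dots,c_k\}$ be a set of representatives of the critical classes of $E$. (i) If $A\le_{\mathcal R}E$, then the rows of $A$ indexed by $c_1,\dots,c_k$ form a generating set for $R(A)$; if moreover $A\,\mathcal{R}\,E$, this generating set is minimal. (ii) If $A\le_{\mathcal L}E$, then the columns of $A$ indexed by $c_1,\dots,c_k$ form a generating set for $C(A)$; if moreover $A\,\mathcal{L}\,E$, this generating set is minimal.
   Context: $\mathbb{FT}$ is $\mathbb{R}$ with $a\oplus b=\max(a,b)$, $a\otimes b=a+b$; $M_n(\mathbb{FT})$ is the semigroup of real $n\times n$ matrices under $(A\otimes B)_{i,j}=\max_k(A_{i,k}+B_{k,j})$. $C(A)$, $R(A)\subseteq\mathbb{R}^n$ are the sets of finite componentwise maxima of real shifts of columns, resp. rows, of $A$; generating sets are with respect to componentwise max and adding real constants. For a semigroup $S$ ($S^1$ = $S$ with identity adjoined if needed): $a\le_{\mathcal R}b$ iff $aS^1\subseteq bS^1$, $a\le_{\mathcal L}b$ iff $S^1a\subseteq S^1b$, $a\,\mathcal R\,b$ iff $aS^1=bS^1$, $a\,\mathcal L\,b$ iff $S^1a=S^1b$. $\Gamma_E$ is the complete weighted digraph on $\{1,\dots,n\}$ with edge $j\to i$ of weight $E_{i,j}$; the maximum cycle mean is the maximum arithmetic mean of edge weights over closed paths; the critical graph consists of all nodes and edges on closed paths attaining the maximum cycle mean; the critical classes are its strongly connected components. *)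

(* The tropical semifield FT = (R, max, +) is modelled over an
   arbitrary real field R : realFieldType (this includes the reals). *)
From HB Require Import structures.
From mathcomp Require Import all_boot all_order all_algebra.
From Stdlib Require Import Relations.
Set Implicit Arguments. Unset Strict Implicit. Unset Printing Implicit Defensive.
Import Order.TTheory GRing.Theory Num.Theory.
Local Open Scope ring_scope.

Section Tropical.
Variable R : realFieldType.

(* max-plus product: (A (x) B)_{ij} = max_k (A_ik + B_kj).  The seed of the
   iterated max is the term k = i, which is itself one of the terms, so the
   big max is exactly the maximum over k. *)
Definition tmul (n : nat) (A B : 'M[R]_n) : 'M[R]_n :=
  \matrix_(i, j) \big[Num.max/(A i i + B i j)]_(k < n) (A i k + B k j).

Definition tidempotent (n : nat) (E : 'M[R]_n) : Prop := tmul E E = E.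

(* B \in A S^1  (principal right ideal, identity adjoined) *)
Definition in_rideal (n : nat) (A B : 'M[R]_n) : Prop :=
  B = A \/ exists X, B = tmul A X.
Definition in_lideal (n : nat) (A B : 'M[R]_n) : Prop :=
  B = A \/ exists X, B = tmul X A.

(* a <=_R b iff a S^1 \subseteq b S^1 ;  a R b iff a S^1 = b S^1 *)
Definition leR (n : nat) (A B : 'M[R]_n) : Prop :=
  forall C, in_rideal A C -> in_rideal B C.
Definition leL (n : nat) (A B : 'M[R]_n) : Prop :=
  forall C, in_lideal A C -> in_lideal B C.
Definition eqR (n : nat) (A B : 'M[R]_n) : Prop := leR A B /\ leR B A.
Definition eqL (n : nat) (A B : 'M[R]_n) : Prop := leL A B /\ leL B A.

(* Vectors of R^n are functions 'I_n -> R, compared pointwise;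
   subsets of R^n are predicates. *)
Definition vset (n : nat) := ('I_n -> R) -> Prop.

Definition tspan (n : nat) (X : vset n) : vset n := fun v =>
  exists (m : nat) (f : 'I_m.+1 -> 'I_n -> R) (lam : 'I_m.+1 -> R),
    (forall t, X (f t)) /\
    forall i, v i = \big[Num.max/(lam ord0 + f ord0 i)]_(t < m.+1) (lam t + f t i).

Definition generates (n : nat) (X V : vset n) : Prop :=
  forall v, V v <-> tspan X v.

Definition minimal_generates (n : nat) (X V : vset n) : Prop :=
  generates X V /\
  forall Y : vset n, (forall w, Y w -> X w) -> generates Y V -> forall w, X w -> Y w.

Definition rows_of (n : nat) (A : 'M[R]_n) : vset n :=
  fun w => exists i, forall j, w j = A i j.
Definition cols_of (n : nat) (A : 'M[R]_n) : vset n :=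
  fun w => exists j, forall i, w i = A i j.
Definition row_space (n : nat) (A : 'M[R]_n) : vset n := tspan (rows_of A).
Definition col_space (n : nat) (A : 'M[R]_n) : vset n := tspan (cols_of A).

Definition rows_at (n k : nat) (A : 'M[R]_n) (c : 'I_k -> 'I_n) : vset n :=
  fun w => exists t, forall j, w j = A (c t) j.
Definition cols_at (n k : nat) (A : 'M[R]_n) (c : 'I_k -> 'I_n) : vset n :=
  fun w => exists t, forall i, w i = A i (c t).

(* Graph Gamma_E: edge a -> b with weight E b a.  A closed path is a nonempty
   sequence of nodes s = [s_0; ...; s_{m-1}] with edges s_t -> s_{t+1} and
   s_{m-1} -> s_0. *)
Definition cyc_edges (n : nat) (s : seq 'I_n) : seq ('I_n * 'I_n) :=
  match s with
  | [::] => [::]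
  | x :: t => zip (x :: t) (rcons t x)
  end.

Definition cyc_weight (n : nat) (E : 'M[R]_n) (s : seq 'I_n) : R :=
  \sum_(e <- cyc_edges s) E e.2 e.1.

Definition cyc_mean (n : nat) (E : 'M[R]_n) (s : seq 'I_n) : R :=
  cyc_weight E s / (size s)%:R.

Definition critical_cycle (n : nat) (E : 'M[R]_n) (s : seq 'I_n) : Prop :=
  s != [::] /\ forall s', s' != [::] -> cyc_mean E s' <= cyc_mean E s.

Definition crit_node (n : nat) (E : 'M[R]_n) (i : 'I_n) : Prop :=
  exists s, critical_cycle E s /\ i \in s.

Definition crit_edge (n : nat) (E : 'M[R]_n) (a b : 'I_n) : Prop :=
  exists s, critical_cycle E s /\ (a, b) \in cyc_edges s.

Definition same_crit_class (n : nat) (E : 'M[R]_n) (i j : 'I_n) : Prop :=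
  crit_node E i /\ crit_node E j /\
  clos_refl_trans _ (@crit_edge n E) i j /\
  clos_refl_trans _ (@crit_edge n E) j i.

Definition crit_class_reps (n k : nat) (E : 'M[R]_n) (c : 'I_k -> 'I_n) : Prop :=
  (forall t, crit_node E (c t)) /\
  (forall t t', same_crit_class E (c t) (c t') -> t = t') /\
  (forall i, crit_node E i -> exists t, same_crit_class E i (c t)).

End Tropical.

From mathcomp Require Import all_boot all_order all_algebra.
From mathcomp Require Import lra.
From Stdlib Require Import Relations FunctionalExtensionality PropExtensionality.
Set Implicit Arguments. Unset Strict Implicit. Unset Printing Implicit Defensive.
Import Order.TTheory GRing.Theory Num.Theory.
Local Open Scope ring_scope.

(* For idempotent E the entries satisfy the triangle inequality
   E i l + E l j <= E i j, so no cycle of the graph of E has positive weight.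
   Following, from a pair (i, j), a maximizing index of E i j = max_l (E i l + E l j)
   again and again eventually closes a cycle of weight 0 through a node y with
   E i j <= E i y + E y j.  Hence the maximum cycle mean is 0, critical nodes have
   E c c = 0, nodes of one critical class satisfy E a b + E b a >= 0, and with one
   representative c_t per class E i j = max_t (E i c_t + E c_t j).  If A = E (x) X,
   this writes every row of A as a max of shifts of the rows A c_t.  If moreover
   E = A (x) Y, writing A c_t through other rows A c_s forces
   E c_s c_t + E c_t c_s >= 0 for some s, hence s = t.  Columns follow by
   transposition. *)

Section TropicalSpan.
Variables (R : realFieldType) (n : nat).
Implicit Types (X Y : vset R n) (v w : 'I_n -> R).

Lemma bigmax_eqP (I : finType) (F : I -> R) i0 x :
  x = \big[Num.max/F i0]_i F i <-> (forall i, F i <= x) /\ (exists i, x <= F i).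
Proof.
split=> [->|[F_le [i le_xF]]].
  split=> [i|]; first exact: le_bigmax.
  apply: (big_ind (fun y => exists i, y <= F i)) => [|a b [i ?] [j ?]|i _].
  - by exists i0.
  - by case: (leP a b) => _; [exists j | exists i].
  - by exists i.
apply: le_anti; rewrite (le_trans le_xF (le_bigmax _ F i)) /=.
exact: bigmax_le.
Qed.

Lemma tspanP X v :
  tspan X v <-> exists m (f : 'I_m.+1 -> 'I_n -> R) (lam : 'I_m.+1 -> R),
    [/\ forall t, X (f t), forall t i, lam t + f t i <= v i
      & forall i, exists t, v i <= lam t + f t i].
Proof.
split=> [[m [f [lam [Xf v_max]]]]|[m [f [lam [Xf v_ge v_le]]]]].
  exists m, f, lam; split=> // [t i|i]; first by have /bigmax_eqP[] := v_max i.
  by have /bigmax_eqP[] := v_max i.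
exists m, f, lam; split=> // i.
by apply/(bigmax_eqP (fun t => lam t + f t i)); split=> [t|]; [exact: v_ge | exact: v_le].
Qed.

Lemma tspan_of_bounds X k (g : 'I_k -> 'I_n -> R) (lam : 'I_k -> R) v (t0 : 'I_k) :
  (forall t, X (g t)) -> (forall t i, lam t + g t i <= v i) ->
  (forall i, exists t, v i <= lam t + g t i) -> tspan X v.
Proof.
case: k g lam t0 => [|k] g lam [] // _ _ Xg v_ge v_le.
by apply/tspanP; exists k, g, lam.
Qed.

Lemma tspan_self X v : X v -> tspan X v.
Proof.
move=> Xv; apply: (@tspan_of_bounds X 1 (fun _ => v) (fun _ => 0) v ord0).
- by [].
- by move=> _ i; rewrite add0r.
- by move=> i; exists ord0; rewrite add0r.
Qed.

Lemma tspan_shift X v a : tspan X v -> tspan X (fun i => a + v i).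
Proof.
move=> /tspanP[m [f [lam [Xf v_ge v_le]]]]; apply/tspanP.
exists m, f, (fun t => a + lam t); split=> // [t i|i]; first by rewrite -addrA lerD2l.
by have [t le_vt] := v_le i; exists t; rewrite -addrA lerD2l.
Qed.

Lemma tspan_max X v w :
  tspan X v -> tspan X w -> tspan X (fun i => Num.max (v i) (w i)).
Proof.
move=> /tspanP[m1 [f1 [l1 [Xf1 v_ge v_le]]]] /tspanP[m2 [f2 [l2 [Xf2 w_ge w_le]]]].
pose f t := match split t with inl t1 => f1 t1 | inr t2 => f2 t2 end.
pose l t := match split t with inl t1 => l1 t1 | inr t2 => l2 t2 end.
apply: (@tspan_of_bounds X _ f l _ (lshift m2.+1 ord0)).
- by move=> t; rewrite /f; case: split.
- move=> t i; rewrite /f /l; case: split => ?.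
    by rewrite le_max v_ge.
  by rewrite le_max w_ge orbT.
- move=> i; have [_|_] := leP (v i) (w i).
    by have [t le_wt] := w_le i; exists (rshift m1.+1 t); rewrite /f /l (unsplitK (inr t)).
  by have [t le_vt] := v_le i; exists (lshift m2.+1 t); rewrite /f /l (unsplitK (inl t)).
Qed.

Lemma tspan_bigmax X m (F : 'I_m.+1 -> 'I_n -> R) :
  (forall t, tspan X (F t)) ->
  tspan X (fun i => \big[Num.max/F ord0 i]_(t < m.+1) F t i).
Proof.
move=> spanF.
pose vmax (u w : 'I_n -> R) i := Num.max (u i) (w i).
have -> : (fun i => \big[Num.max/F ord0 i]_(t < m.+1) F t i) =
          \big[vmax/F ord0]_(t < m.+1) F t.
  apply: functional_extensionality => i.
  by rewrite (big_morph (fun u : 'I_n -> R => u i) (id1 := F ord0 i) (op1 := Num.max)).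
by apply: (big_ind (tspan X)) => // u w; apply: tspan_max.
Qed.

Lemma tspan_trans X Y v :
  (forall w, X w -> tspan Y w) -> tspan X v -> tspan Y v.
Proof.
move=> XY [m [f [lam [Xf v_max]]]].
have -> : v = fun i => \big[Num.max/lam ord0 + f ord0 i]_(t < m.+1) (lam t + f t i).
  exact: functional_extensionality.
by apply: (tspan_bigmax (F := fun t i => lam t + f t i)) => t; apply/tspan_shift/XY.
Qed.

End TropicalSpan.

Section TropicalProduct.
Variables (R : realFieldType) (n : nat).
Implicit Types A B E : 'M[R]_n.

Lemma le_tmul A B i j l : A i l + B l j <= tmul A B i j.
Proof. by rewrite mxE; apply: (le_bigmax _ (fun k => A i k + B k j)). Qed.

Lemma tmul_le A B i j x : (forall l, A i l + B l j <= x) -> tmul A B i j <= x.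
Proof. by move=> le_x; rewrite mxE; apply: bigmax_le. Qed.

Lemma tmul_attained A B i j : exists l, tmul A B i j = A i l + B l j.
Proof.
have [_ [l le_l]] := (bigmax_eqP (fun k => A i k + B k j) i (tmul A B i j)).1 (mxE _ _ _ _).
by exists l; apply: le_anti; rewrite le_l le_tmul.
Qed.

Lemma tmulT A B : (tmul A B)^T = tmul B^T A^T.
Proof.
apply/matrixP => i j; rewrite [LHS]mxE; apply: le_anti; apply/andP; split.
  apply: tmul_le => l; have := le_tmul B^T A^T i j l.
  by rewrite [B^T _ _]mxE [A^T _ _]mxE addrC.
by apply: tmul_le => l; rewrite [B^T _ _]mxE [A^T _ _]mxE addrC le_tmul.
Qed.

Lemma tmul_row_mono A B i j lam :
  (forall l, lam + A j l <= A i l) -> forall m, lam + tmul A B j m <= tmul A B i m.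
Proof.
move=> le_ji m; have [q ->] := tmul_attained A B j m.
by apply: le_trans (le_tmul A B i m q); rewrite addrA lerD2r.
Qed.

Lemma tidempotent_tr E : tidempotent E -> tidempotent E^T.
Proof. by rewrite /tidempotent -tmulT => ->. Qed.

Lemma idem_triangle E i j l : tidempotent E -> E i l + E l j <= E i j.
Proof. by move=> idE; rewrite -{3}idE le_tmul. Qed.

Lemma idem_diag_le0 E i : tidempotent E -> E i i <= 0.
Proof. by move=> /(idem_triangle i i i); rewrite -lerBrDr subrr. Qed.

Lemma idem_argmax E i : tidempotent E ->
  exists sg : 'I_n -> 'I_n, forall x, E i x = E i (sg x) + E (sg x) x.
Proof.
move=> idE; exists (fun x => odflt x [pick q | E i x == E i q + E q x]) => x.
case: pickP => [q /eqP // | no_q].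
have [q eq_q] := tmul_attained E E i x; rewrite idE in eq_q.
by have := no_q q; rewrite eq_q eqxx.
Qed.

End TropicalProduct.

Lemma rot_zip (S T : Type) k (s : seq S) (t : seq T) :
  size s = size t -> rot k (zip s t) = zip (rot k s) (rot k t).
Proof.
move=> eq_st; rewrite /rot zip_cat ?size_drop ?eq_st //.
congr (_ ++ _); elim: s t k {eq_st} => [|x s IH] [|y t] [|k] //=.
all: by [case: drop | rewrite IH].
Qed.

Lemma map_traject (T : Type) (f : T -> T) x m :
  map f (traject f x m) = traject f (f x) m.
Proof. by elim: m x => //= m IH x; rewrite IH. Qed.

Lemma traject_rot1 (T : Type) (f : T -> T) x m : iter m f x = x ->
  rot 1 (traject f x m) = map f (traject f x m).
Proof.
case: m => [//|m] per; rewrite map_traject trajectS rot1_cons trajectSr.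
by rewrite -iterSr per.
Qed.

Lemma iter_collision (T : finType) (f : T -> T) x :
  exists a b, (a < b)%N /\ iter a f x = iter b f x.
Proof.
have : ~~ uniq (traject f x #|T|.+1).
  apply/negP => /card_uniqP; rewrite size_traject => card_eq.
  by have := max_card (mem (traject f x #|T|.+1)); rewrite card_eq ltnn.
by rewrite looping_uniq negbK => /trajectP[a lt_a eq_a]; exists a, #|T|.
Qed.

Section Cycles.
Variables (R : realFieldType) (n : nat).
Implicit Types (E : 'M[R]_n) (s : seq 'I_n).

Lemma cyc_edgesE s : cyc_edges s = zip s (rot 1 s).
Proof. by case: s => // x t; rewrite rot1_cons. Qed.

Lemma cyc_edges_rot k s : cyc_edges (rot k s) = rot k (cyc_edges s).
Proof. by rewrite !cyc_edgesE rot_zip ?size_rot // rot_rot. Qed.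

Lemma mem_cyc_edges x s : x \in s -> exists y, (x, y) \in cyc_edges s.
Proof.
move=> xs; exists (nth x (rot 1 s) (index x s)).
rewrite cyc_edgesE -{1}(nth_index x xs) -nth_zip ?size_rot //.
by apply: mem_nth; rewrite size_zip size_rot minnn index_mem.
Qed.

Lemma cyc_edge_front s x y : (x, y) \in cyc_edges s ->
  exists t, perm_eq (cyc_edges (x :: t)) (cyc_edges s) /\ y = head x t.
Proof.
case/rot_to=> m e_rest e_rot; rewrite -cyc_edges_rot in e_rot.
have perm_rot_s : perm_eq (cyc_edges (rot m s)) (cyc_edges s).
  by rewrite cyc_edges_rot perm_rot.
case: (rot m s) e_rot perm_rot_s => [//|x' [|z t]] /= [-> <- _] perm_t.
  by exists [::].
by exists (z :: t).
Qed.

Fixpoint path_weight E x t : R :=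
  if t is y :: t' then E y x + path_weight E y t' else 0.

Lemma cyc_weight_cons E x t :
  cyc_weight E (x :: t) = path_weight E x t + E x (last x t).
Proof.
rewrite /cyc_weight /=; elim: t x {-2 4}x => [|y t IH] x z /=.
  by rewrite big_cons big_nil addr0 add0r.
by rewrite big_cons IH addrA.
Qed.

Lemma path_weight_le E x t z : tidempotent E ->
  path_weight E x t + E z (last x t) <= E z x.
Proof.
move=> idE; elim: t x => [|y t IH] x /=; first by rewrite add0r.
rewrite -addrA addrC; apply: le_trans (idem_triangle z x y idE).
by rewrite lerD2r IH.
Qed.

Lemma cyc_weight_le0 E s : tidempotent E -> cyc_weight E s <= 0.
Proof.
move=> idE; case: s => [|x t]; first by rewrite /cyc_weight big_nil.
by rewrite cyc_weight_cons (le_trans (path_weight_le _ _ _ idE)) ?idem_diag_le0.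
Qed.

Lemma cyc_edge_pair E s x y : tidempotent E -> (x, y) \in cyc_edges s ->
  0 <= cyc_weight E s -> 0 <= E x y + E y x.
Proof.
move=> idE /cyc_edge_front[t [perm_t ->]].
rewrite /cyc_weight -(perm_big _ perm_t) -/(cyc_weight E (x :: t)) cyc_weight_cons.
case: t {perm_t} => [|z t] /=; first by rewrite add0r => ?; apply: addr_ge0.
by have := path_weight_le z t x idE; lra.
Qed.

Section ArgmaxCycle.
Variables (E : 'M[R]_n) (i : 'I_n) (sg : 'I_n -> 'I_n).
Hypothesis argmax : forall x, E i x = E i (sg x) + E (sg x) x.

Lemma argmax_cycle_weight y m : iter m sg y = y ->
  cyc_weight E (traject sg y m) = 0.
Proof.
(* The weights E (sg x) x = E i x - E i (sg x) telescope around the orbit. *)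
move=> per; rewrite /cyc_weight cyc_edgesE traject_rot1 //.
rewrite -{1}(map_id (traject sg y m)) zip_map big_map /=.
have -> : \sum_(x <- traject sg y m) E (sg x) x =
          \sum_(x <- traject sg y m) E i x - \sum_(x <- traject sg y m) E i (sg x).
  by rewrite -sumrB; apply: eq_bigr => x _; have := argmax x; lra.
rewrite -(big_map sg xpredT (E i)) -traject_rot1 //.
have perm_rot1 : perm_eq (rot 1 (traject sg y m)) (traject sg y m) by rewrite perm_rot.
by rewrite (perm_big _ perm_rot1) subrr.
Qed.

Lemma argmax_iter_bound j m : tidempotent E ->
  E i j <= E i (iter m.+1 sg j) + E (iter m.+1 sg j) j.
Proof.
move=> idE; elim: m => [|m IH]; first by rewrite -argmax.
apply: le_trans IH _; rewrite [E i (iter m.+1 sg j)]argmax -addrA lerD2l.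
exact: idem_triangle.
Qed.

End ArgmaxCycle.

Lemma exists_zero_cycle E i j : tidempotent E ->
  exists y s, [/\ y \in s, cyc_weight E s = 0 & E i j <= E i y + E y j].
Proof.
move=> idE; have [sg argmax] := idem_argmax i idE.
have [a [b [lt_ab eq_ab]]] := iter_collision sg j.
case: b lt_ab eq_ab => // b lt_ab eq_ab.
have per : iter (b.+1 - a) sg (iter b.+1 sg j) = iter b.+1 sg j.
  by rewrite -{1}eq_ab -iterD subnK // ltnW.
exists (iter b.+1 sg j), (traject sg (iter b.+1 sg j) (b.+1 - a)); split.
- by move: lt_ab; rewrite -subn_gt0; case: (b.+1 - a)%N => // m _; rewrite inE eqxx.
- exact: argmax_cycle_weight.
- exact: argmax_iter_bound.
Qed.

End Cycles.

Section Critical.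
Variables (R : realFieldType) (n : nat) (E : 'M[R]_n).
Hypothesis idE : tidempotent E.

Lemma critical_cycleP s :
  critical_cycle E s <-> s != [::] /\ cyc_weight E s = 0.
Proof.
have mean_le0 s' : cyc_mean E s' <= 0.
  by rewrite /cyc_mean mulr_le0_ge0 ?cyc_weight_le0 ?invr_ge0 ?ler0n.
split=> [[s_ne crit_s] | [s_ne w0]]; last first.
  by split=> // s' _; rewrite {2}/cyc_mean w0 mul0r.
split=> //; apply/le_anti; rewrite cyc_weight_le0 //=.
case: s s_ne crit_s => // x t _ crit_s.
have [y [s0 [y_s0 w0 _]]] := exists_zero_cycle x x idE.
have s0_ne : s0 != [::] by case: s0 y_s0 {w0}.
have := crit_s s0 s0_ne.
by rewrite {1}/cyc_mean w0 mul0r /cyc_mean pmulr_lge0 // invr_gt0 ltr0n.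
Qed.

Lemma crit_edge_pair a b : crit_edge E a b -> 0 <= E a b + E b a.
Proof.
by case=> s [/critical_cycleP[_ w0] ab_s]; apply: (cyc_edge_pair idE ab_s); rewrite w0.
Qed.

Lemma crit_node_diag x : crit_node E x -> E x x = 0.
Proof.
case=> s [crit_s x_s]; have [y xy_s] := mem_cyc_edges x_s.
have : 0 <= E x y + E y x by apply: crit_edge_pair; exists s.
have := idem_triangle x x y idE; have := idem_diag_le0 x idE; lra.
Qed.

Lemma crit_reach_pair a b : clos_refl_trans _ (crit_edge E) a b ->
  0 <= E a a -> 0 <= E a b + E b a.
Proof.
elim=> {a b} [a b /crit_edge_pair // | a | a b c _ IHab _ IHbc] Eaa.
  by rewrite addr_ge0.
have := IHab Eaa => pair_ab.
have Ebb : 0 <= E b b by have := idem_triangle b b a idE; lra.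
have := IHbc Ebb; have := idem_triangle a c b idE; have := idem_triangle c a b idE.
lra.
Qed.

End Critical.

(* The critical rows and columns factor E: with the triangle inequality, the last
   clause says E i j = max_t (E i c_t + E c_t j). *)
Definition crit_basis (R : realFieldType) n k (E : 'M[R]_n) (c : 'I_k -> 'I_n) :=
  [/\ forall t, E (c t) (c t) = 0,
      forall s t, 0 <= E (c s) (c t) + E (c t) (c s) -> s = t &
      forall i j, exists t, E i j <= E i (c t) + E (c t) j].

Lemma crit_class_reps_basis (R : realFieldType) n k (E : 'M[R]_n) (c : 'I_k -> 'I_n) :
  tidempotent E -> crit_class_reps E c -> crit_basis E c.
Proof.
move=> idE [crit_c [reps_inj reps_cover]]; rewrite /crit_basis; split.
- by move=> t; apply: crit_node_diag.
- move=> s t pair_st; apply: reps_inj.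
  have crit_cyc : critical_cycle E [:: c s; c t].
    apply/(critical_cycleP idE); split=> //; apply/le_anti/andP.
    by rewrite cyc_weight_le0 //= cyc_weight_cons /=; lra.
  have edge u v : (u, v) \in cyc_edges [:: c s; c t] ->
      clos_refl_trans _ (crit_edge E) u v.
    by move=> uv; apply: rt_step; exists [:: c s; c t].
  by do !split; try apply: crit_c; apply: edge; rewrite !inE eqxx ?orbT.
- move=> i j; have [y [s [y_s w0 le_ij]]] := exists_zero_cycle i j idE.
  have crit_y : crit_node E y.
    by exists s; split=> //; apply/(critical_cycleP idE); split=> //; case: s y_s {w0}.
  have [t [_ [_ [reach _]]]] := reps_cover y crit_y; exists t.
  have Eyy : 0 <= E y y by rewrite (crit_node_diag idE crit_y).
  have := crit_reach_pair idE reach Eyy.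
  have := idem_triangle i (c t) y idE; have := idem_triangle (c t) j y idE; lra.
Qed.

Lemma crit_basis_tr (R : realFieldType) n k (E : 'M[R]_n) (c : 'I_k -> 'I_n) :
  crit_basis E c -> crit_basis E^T c.
Proof.
case=> diag sep cover; rewrite /crit_basis; split=> [t|s t|i j]; rewrite ?mxE.
- exact: diag.
- by rewrite addrC; apply: sep.
- by have [t le_ji] := cover j i; exists t; rewrite !mxE addrC.
Qed.

Section RowGenerators.
Variables (R : realFieldType) (n k : nat) (c : 'I_k -> 'I_n).

Lemma rows_generate (E X : 'M[R]_n) : tidempotent E -> crit_basis E c ->
  generates (rows_at (tmul E X) c) (row_space (tmul E X)).
Proof.
move=> idE [_ _ cover] v; split; last first.
  by apply: tspan_trans => w [t w_row]; apply: tspan_self; exists (c t).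
apply: tspan_trans => w [i w_row]; have [t0 _] := cover i i.
apply: (@tspan_of_bounds _ _ _ k (fun t => tmul E X (c t)) (fun t => E i (c t)) w t0).
- by move=> t; exists t.
- move=> t l; rewrite w_row; apply: tmul_row_mono => m; exact: idem_triangle.
- move=> l; rewrite w_row; have [q ->] := tmul_attained E X i l.
  have [t le_iq] := cover i q; exists t.
  have := le_tmul E X (c t) l q; lra.
Qed.

Lemma rows_minimal (A E Y : 'M[R]_n) : E = tmul A Y -> crit_basis E c ->
  forall Z : vset R n, (forall w, Z w -> rows_at A c w) ->
  generates Z (row_space A) -> forall w, rows_at A c w -> Z w.
Proof.
move=> eE [diag sep _] Z Z_rows genZ w [t w_row].
have /genZ/tspanP[m [f [lam [Zf f_le w_le]]]] : row_space A w.
  by apply: tspan_self; exists (c t).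
have [q Ett] := tmul_attained A Y (c t) (c t); rewrite -eE diag in Ett.
have [u le_wq] := w_le q; have [s f_row] := Z_rows _ (Zf u).
have lam_le : lam u <= E (c t) (c s).
  have := @tmul_row_mono _ _ A Y (c t) (c s) (lam u) _ (c s).
  by rewrite -eE diag addr0; apply=> l; rewrite -f_row -w_row; apply: f_le.
have pos_st : 0 <= lam u + E (c s) (c t).
  rewrite w_row f_row in le_wq; have := le_tmul A Y (c s) (c t) q.
  by rewrite -eE; lra.
have eq_st : s = t by apply: sep; lra.
suff -> : w = f u by exact: Zf.
by apply: functional_extensionality => j; rewrite w_row f_row eq_st.
Qed.

End RowGenerators.

Section GreenFactorizations.
Variables (R : realFieldType) (n : nat).
Implicit Types A E : 'M[R]_n.

Lemma leR_idem_tmul A E : tidempotent E -> leR A E -> exists X, A = tmul E X.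
Proof. by move=> idE /(_ A (or_introl erefl)) [->|//]; exists E; rewrite idE. Qed.

Lemma idem_leR_tmul A E : tidempotent E -> leR E A -> exists Y, E = tmul A Y.
Proof. by move=> idE /(_ E (or_introl erefl)) [eEA|//]; exists E; rewrite -eEA idE. Qed.

Lemma leL_idem_tmul A E : tidempotent E -> leL A E -> exists X, A = tmul X E.
Proof. by move=> idE /(_ A (or_introl erefl)) [->|//]; exists E; rewrite idE. Qed.

Lemma idem_leL_tmul A E : tidempotent E -> leL E A -> exists Y, E = tmul Y A.
Proof. by move=> idE /(_ E (or_introl erefl)) [eEA|//]; exists E; rewrite -eEA idE. Qed.

End GreenFactorizations.

Lemma cols_atE (R : realFieldType) n k (A : 'M[R]_n) (c : 'I_k -> 'I_n) :
  cols_at A c = rows_at A^T c.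
Proof.
apply: functional_extensionality => w; apply: propositional_extensionality.
by split=> -[t w_col]; exists t => i; rewrite w_col mxE.
Qed.

Lemma col_spaceE (R : realFieldType) n (A : 'M[R]_n) : col_space A = row_space A^T.
Proof.
congr tspan; apply: functional_extensionality => w.
apply: propositional_extensionality.
by split=> -[j w_col]; exists j => i; rewrite w_col mxE.
Qed.

Theorem corollary5p3 (R : realFieldType) (n k : nat) (A E : 'M[R]_n)
    (c : 'I_k -> 'I_n) :
  tidempotent E -> crit_class_reps E c ->
  ((leR A E -> generates (rows_at A c) (row_space A)) /\
   (eqR A E -> minimal_generates (rows_at A c) (row_space A))) /\
  ((leL A E -> generates (cols_at A c) (col_space A)) /\
   (eqL A E -> minimal_generates (cols_at A c) (col_space A))).
Proof.
move=> idE reps; have basis := crit_class_reps_basis idE reps.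
have basisT := crit_basis_tr basis; have idET := tidempotent_tr idE.
have rows_gen : leR A E -> generates (rows_at A c) (row_space A).
  by case/(leR_idem_tmul idE) => X ->; apply: rows_generate.
have cols_gen : leL A E -> generates (cols_at A c) (col_space A).
  case/(leL_idem_tmul idE) => X ->.
  by rewrite cols_atE col_spaceE tmulT; apply: rows_generate.
split; split=> // -[leAE leEA]; split; [exact: rows_gen | | exact: cols_gen |].
- by have [Y eE] := idem_leR_tmul idE leEA; apply: rows_minimal eE basis.
- have [Y /(congr1 trmx)] := idem_leL_tmul idE leEA; rewrite tmulT => eET.
  by rewrite cols_atE col_spaceE; apply: rows_minimal eET basisT.
Qed.
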